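(* Let $r\ge 3$ be an integer and $p\ge 5$ an odd prime. Let $e_0=1$, $e_i=\zeta_{2^r}^i+\zeta_{2^r}^{-i}$ ($i\ge1$), $n_1=2^{r-2}$, $b_j=\zeta_p^j+\zeta_p^{-j}$ ($j\ge1$), $n_2=\frac{p-1}{2}$, and let $\mathbb{K}=\mathbb{Q}(\zeta_{2^r}+\zeta_{2^r}^{-1})\,\mathbb{Q}(\zeta_p+\zeta_p^{-1})$. Let $\mathcal{I}\subseteq\mathcal{O}_{\mathbb{K}}$ be the $\mathbb{Z}$-module with $\mathbb{Z}$-basis consisting of all products $e_ib_j$ ($0\le i\le n_1-1$, $1\le j\le n_2$) except that $e_0b_{n_2}$ is replaced by $2e_0b_{n_2}$. Then $\mathcal{I}$ is not an ideal of $\mathcal{O}_{\mathbb{K}}$.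
   Context: $\zeta_m=e^{2\pi i/m}$. *)

From HB Require Import structures.
From mathcomp Require Import all_boot all_order all_algebra all_field.
Set Implicit Arguments. Unset Strict Implicit. Unset Printing Implicit Defensive.
Import Order.TTheory GRing.Theory Num.Theory.
Local Open Scope ring_scope.

(* Ambient field: algC (algebraic complex numbers), with conjugation and order.
   n.-root (-1) is the n-th root of -1 with minimal nonnegative argument,
   i.e. exp(i*pi/n); its square is zeta_n = exp(2*pi*i/n). *)
Definition zeta (m : nat) : algC := (m.-root (-1)) ^+ 2.

Definition zsum (m k : nat) : algC := zeta m ^+ k + (zeta m)^-1 ^+ k.

Definition e_ (r i : nat) : algC := if i == 0%N then 1 else zsum (2 ^ r) i.
Definition b_ (p j : nat) : algC := zsum p j.

Definition n1 (r : nat) : nat := (2 ^ (r - 2))%N.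
Definition n2 (p : nat) : nat := ((p - 1) %/ 2)%N.

(* K = Q(e_1) Q(b_1) = Q(e_1, b_1): smallest subfield of algC containing e_1, b_1 *)
Definition inK (r p : nat) (x : algC) : Prop :=
  forall S : divringClosed algC, e_ r 1 \in S -> b_ p 1 \in S -> x \in S.

Definition inOK (r p : nat) (x : algC) : Prop := inK r p x /\ x \in Aint.

(* generator of I indexed by i in [0, n1-1] and j' = j-1, j in [1, n2];
   e_0 b_{n2} is replaced by 2 e_0 b_{n2} *)
Definition Igen (r p : nat) (i : 'I_(n1 r)) (j : 'I_(n2 p)) : algC :=
  (if (val i == 0%N) && (j.+1 == n2 p) then 2 else 1) * e_ r i * b_ p j.+1.

Definition inI (r p : nat) (x : algC) : Prop :=
  exists c : 'I_(n1 r) -> 'I_(n2 p) -> int,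
    x = \sum_(i < n1 r) \sum_(j < n2 p) Igen i j *~ c i j.

Definition is_ideal_of (R J : algC -> Prop) : Prop :=
  (forall x, J x -> R x) /\ J 0 /\
  (forall x y, J x -> J y -> J (x - y)) /\
  (forall a x, R a -> J x -> J (a * x)).

(* If I were an ideal it would contain b_1 b_(n2-1) = b_n2 + b_(n2-2), since
   b_(n2-1) is in I and b_1 in O_K.  Averaging an expansion of this element over
   the automorphisms fixing zeta_p kills every e_i with i > 0, leaving
   b_n2 + b_(n2-2) = sum_j a_j b_j with a_n2 even.  The defect of this relation
   vanishes at every nontrivial conjugate zeta_p |-> zeta_p^k, so its sum over all
   p-th roots of unity weighted by (zeta_p^k)^(n2+1), which isolates the
   coefficient of b_n2, equals its value at 1: p (a_n2 - 1) = 2 (sum_j a_j - 2),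
   impossible as p and a_n2 - 1 are odd. *)

From mathcomp Require Import all_boot all_order all_algebra all_field.
From mathcomp Require Import zify ring.
Set Implicit Arguments. Unset Strict Implicit. Unset Printing Implicit Defensive.
Import Order.TTheory GRing.Theory Num.Theory.
Local Open Scope ring_scope.

Lemma zeta_expr_order m : zeta m ^+ m = 1.
Proof. by case: m => [|m]; rewrite ?expr0 // /zeta exprAC rootCK // sqrrN expr1n. Qed.

Lemma zeta_expr_half r : (0 < r)%N -> zeta (2 ^ r) ^+ (2 ^ r.-1) = -1.
Proof. by move=> r_gt0; rewrite /zeta -exprM -expnS prednK // rootCK ?expn_gt0. Qed.

Lemma zeta_neq0 m : (0 < m)%N -> zeta m != 0.
Proof.
move=> m_gt0; apply: contra_eq_neq (zeta_expr_order m) => ->.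
by rewrite expr0n (negbTE (lt0n_neq0 m_gt0)) eq_sym oner_neq0.
Qed.

Lemma oner_neqN1 : (1 : algC) != -1.
Proof. by rewrite eq_sym lt_eqF // (lt_trans (ltrN10 _) ltr01). Qed.

Lemma zeta_neq1 m : (1 < m)%N -> zeta m != 1.
Proof.
move=> m_gt1; rewrite /zeta sqrf_eq1 negb_or; apply/andP; split.
  apply/eqP => root1; have /= := @rootCK algC m (ltnW m_gt1) (-1).
  by rewrite root1 expr1n => /eqP; rewrite (negbTE oner_neqN1).
by apply/eqP => rootN1; have := @rootC_lt0 algC m (-1) m_gt1; rewrite rootN1 ltrN10.
Qed.

Lemma expr_eq1_prime_power (z : algC) q k : prime q ->
  z ^+ (q ^ k.+1) = 1 -> z ^+ (q ^ k) != 1 ->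
  forall e, (z ^+ e == 1) = (q ^ k.+1 %| e)%N.
Proof.
move=> q_pr zq zq' e.
have q_gt0 : (0 < q ^ k.+1)%N by rewrite expn_gt0 prime_gt0.
have [m z_pr m_dvd] := prim_order_exists q_gt0 zq.
case/(dvdn_pfactor _ _ q_pr): m_dvd z_pr => s s_le -> z_pr.
rewrite -(prim_order_dvd z_pr); suff -> : s = k.+1 by [].
apply/eqP; rewrite eqn_leq s_le ltnNge; apply: contra zq' => s_le_k.
by rewrite -(prim_order_dvd z_pr) dvdn_exp2l.
Qed.

Lemma zeta_prime_expr_eq1 p e : prime p -> (zeta p ^+ e == 1) = (p %| e)%N.
Proof.
move=> p_pr; apply: (@expr_eq1_prime_power _ p 0) => //.
  exact: zeta_expr_order.
exact/zeta_neq1/prime_gt1.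
Qed.

Lemma zeta_2pow_expr_eq1 r e : (0 < r)%N -> (zeta (2 ^ r) ^+ e == 1) = (2 ^ r %| e)%N.
Proof.
move=> r_gt0; rewrite -(prednK r_gt0); apply: expr_eq1_prime_power => //.
  exact: zeta_expr_order.
by rewrite prednK // zeta_expr_half // eq_sym oner_neqN1.
Qed.

Definition cosum (z : algC) (m : nat) : algC := z ^+ m + z^-1 ^+ m.

Lemma rmorph_cosum (u : {rmorphism algC -> algC}) z m : u (cosum z m) = cosum (u z) m.
Proof. by rewrite rmorphD !rmorphXn fmorphV. Qed.

Lemma cosum1 m : cosum 1 m = 2.
Proof. by rewrite /cosum invr1 expr1n. Qed.

Lemma cosumM z a b : z != 0 -> (b <= a)%N ->
  cosum z a * cosum z b = cosum z (a + b) + cosum z (a - b).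
Proof.
move=> z_neq0 /subnK {1 2}<-; rewrite /cosum !exprVn !exprD.
have : z ^+ b != 0 by rewrite expf_neq0.
have : z ^+ (a - b) != 0 by rewrite expf_neq0.
move: (z ^+ (a - b)) (z ^+ b) => x y x_neq0 y_neq0.
by field; apply/andP.
Qed.

Lemma sum_expr_eq0 (w : algC) n : w ^+ n = 1 -> w != 1 -> \sum_(t < n) w ^+ t = 0.
Proof.
move=> wn w_neq1; have /esym/eqP := subrX1 w n.
by rewrite wn subrr mulf_eq0 subr_eq0 (negbTE w_neq1) => /eqP.
Qed.

Lemma sum_root_expr (z : algC) m e : (forall e, (z ^+ e == 1) = (m %| e)%N) ->
  \sum_(k < m) (z ^+ k) ^+ e = if (m %| e)%N then m%:R else 0.
Proof.
move=> z_order; under eq_bigr do rewrite exprAC.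
have /eqP ze_m : (z ^+ e) ^+ m == 1 by rewrite -exprM z_order dvdn_mull.
case: ifP => [m_dvd_e | m_ndvd_e].
  have /eqP -> : z ^+ e == 1 by rewrite z_order.
  by under eq_bigr do rewrite expr1n; rewrite sumr_const card_ord.
by rewrite sum_expr_eq0 // z_order m_ndvd_e.
Qed.

Lemma sum_twisted_expr_eq0 (y : algC) M p i : coprime p M ->
    (forall e, (y ^+ e == 1) = (2 * M %| e)%N) -> (0 < i < M)%N ->
  \sum_(t < M) (y ^+ (1 + 2 * p * t)) ^+ i = 0.
Proof.
move=> co_pM y_order /andP[i_gt0 i_lt_M].
under eq_bigr => t _ do
  rewrite -exprM mulnDl mul1n exprD mulnAC exprM.
rewrite -mulr_sumr sum_expr_eq0 ?mulr0 //.
  by apply/eqP; rewrite -exprM y_order dvdn_mul // -mulnA dvdn_mulr.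
rewrite y_order -mulnA dvdn_pmul2l // Gauss_dvdr 1?coprime_sym //.
by apply: contraTN i_lt_M => /(dvdn_leq i_gt0); rewrite leqNgt.
Qed.

Definition ecos (z : algC) (i : nat) : algC := if i == 0%N then 1 else cosum z i.

Lemma sum_twisted_ecos (y : algC) M p i : coprime p M ->
    (forall e, (y ^+ e == 1) = (2 * M %| e)%N) -> (i < M)%N ->
  \sum_(t < M) ecos (y ^+ (1 + 2 * p * t)) i = if i == 0%N then M%:R else 0.
Proof.
move=> co_pM y_order i_lt_M; rewrite /ecos; case: eqP => [_ | /eqP i_neq0].
  by rewrite sumr_const card_ord.
have yV_order e : (y^-1 ^+ e == 1) = (2 * M %| e)%N by rewrite exprVn invr_eq1.
have i_range : (0 < i < M)%N by rewrite lt0n i_neq0.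
rewrite big_split /=; under [X in _ + X]eq_bigr do rewrite -exprVn.
by rewrite !(sum_twisted_expr_eq0 co_pM) ?addr0.
Qed.

Lemma exists_aut_zeta m k : coprime k m ->
  exists u : {rmorphism algC -> algC}, forall d, (d %| m)%N -> u (zeta d) = zeta d ^+ k.
Proof.
move=> co_km; have [u uE] := Qn_aut_exists co_km; exists u => d /dvdnP[q m_eq].
by rewrite uE // m_eq mulnC exprM zeta_expr_order expr1n.
Qed.

Lemma rmorph_b (u : {rmorphism algC -> algC}) p k j :
  u (zeta p) = zeta p ^+ k -> u (b_ p j) = cosum (zeta p ^+ k) j.
Proof. by move=> u_zeta; rewrite rmorph_cosum u_zeta. Qed.

Lemma coprime_twist r p t : odd p -> coprime (1 + 2 * p * t) (2 ^ r * p).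
Proof.
move=> p_odd; rewrite coprimeMr coprime_sym coprimeXl ?coprime2n ?oddD ?oddM //=.
by rewrite -coprime_modl mulnAC addnC modnMDl coprime_modl coprime1n.
Qed.

Lemma exists_aut_twist r p t : odd p ->
  exists u : {rmorphism algC -> algC},
    u (zeta p) = zeta p /\ u (zeta (2 ^ r)) = zeta (2 ^ r) ^+ (1 + 2 * p * t).
Proof.
move=> p_odd; have [u uE] := exists_aut_zeta (coprime_twist r t p_odd).
exists u; split; last exact/uE/dvdn_mulr.
by rewrite uE ?dvdn_mull // exprD expr1 mulnAC mulnC exprM zeta_expr_order expr1n mulr1.
Qed.

(* As t ranges below 2^(r-1), the exponents 1 + 2pt run over all odd residues
   modulo 2^r, so this averages over the whole Galois group of Q(zeta_(2^r)). *)
Lemma sum_twisted_e r p i : (0 < r)%N -> odd p -> (i < n1 r)%N ->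
  \sum_(t < 2 ^ r.-1) ecos (zeta (2 ^ r) ^+ (1 + 2 * p * t)) i
    = if i == 0%N then (2 ^ r.-1)%:R else 0.
Proof.
move=> r_gt0 p_odd i_lt; apply: sum_twisted_ecos.
- by rewrite coprime_sym coprimeXl ?coprime2n.
- by move=> e; rewrite -expnS prednK // zeta_2pow_expr_eq1.
- by apply: leq_trans i_lt _; rewrite leq_exp2l //; lia.
Qed.

Lemma n1_gt0 r : (0 < n1 r)%N.
Proof. by rewrite expn_gt0. Qed.

Lemma inI_fixed_eq_b_span r p x (c : 'I_(n1 r) -> 'I_(n2 p) -> int) :
    (0 < r)%N -> odd p ->
    (forall u : {rmorphism algC -> algC}, u (zeta p) = zeta p -> u x = x) ->
    x = \sum_(i < n1 r) \sum_(j < n2 p) Igen i j *~ c i j ->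
  x = \sum_(j < n2 p)
        ((if j.+1 == n2 p then 2 else 1) * b_ p j.+1) *~ c (Ordinal (n1_gt0 r)) j.
Proof.
move=> r_gt0 p_odd x_fixed x_eq.
pose i0 := Ordinal (n1_gt0 r); pose M := (2 ^ r.-1)%N.
pose Y (i : 'I_(n1 r)) := \sum_(j < n2 p)
  ((if (val i == 0%N) && (j.+1 == n2 p) then 2 else 1) * b_ p j.+1) *~ c i j.
have x_eY : x = \sum_(i < n1 r) e_ r i * Y i.
  rewrite x_eq; apply: eq_bigr => i _; rewrite mulr_sumr; apply: eq_bigr => j _.
  by rewrite /Igen mulrzAr mulrCA mulrA.
have x_twist (t : 'I_M) :
    x = \sum_(i < n1 r) ecos (zeta (2 ^ r) ^+ (1 + 2 * p * t)) i * Y i.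
  have [u [u_zeta_p u_zeta_2r]] := exists_aut_twist r t p_odd.
  have u_Y i : u (Y i) = Y i.
    rewrite rmorph_sum; apply: eq_bigr => j _.
    rewrite rmorphMz rmorphM rmorph_cosum u_zeta_p.
    by case: ifP; rewrite ?rmorph_nat ?rmorph1.
  rewrite -{1}(x_fixed u u_zeta_p) x_eY rmorph_sum; apply: eq_bigr => i _.
  rewrite rmorphM u_Y /e_ /ecos; case: eqP; rewrite ?rmorph1 // => _.
  by rewrite rmorph_cosum u_zeta_2r.
have avg_Y (i : 'I_(n1 r)) :
    \sum_(t < M) ecos (zeta (2 ^ r) ^+ (1 + 2 * p * t)) i * Y i
    = (if val i == 0%N then M%:R else 0) * Y i.
  by rewrite -mulr_suml sum_twisted_e.
have : x *+ M = Y i0 *+ M.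
  have -> : x *+ M = \sum_(t < M) x by rewrite sumr_const card_ord.
  rewrite (eq_bigr _ (fun t _ => x_twist t)) exchange_big (bigD1 i0) // avg_Y.
  by rewrite big1 /= ?addr0 ?mulr_natl // => i i_neq0; rewrite avg_Y ifN ?mul0r.
by move=> /(pmulrnI (expn_gt0 2 r.-1 : _ = true)) ->.
Qed.

Lemma prime_ge5_odd p : prime p -> (5 <= p)%N -> odd p.
Proof. by move=> p_pr; apply: contraTT => /(prime_oddPn p_pr) ->. Qed.

Lemma odd_n2 p : odd p -> p = (2 * n2 p).+1.
Proof. by move=> p_odd; rewrite /n2 -[in LHS](odd_double_half p) p_odd -divn2; lia. Qed.

Lemma mulX_cosum (y : algC) a m : y != 0 -> (m <= a)%N ->
  y ^+ a * cosum y m = y ^+ (a + m) + y ^+ (a - m).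
Proof.
move=> y_neq0 m_le_a; rewrite /cosum mulrDr exprD exprVn; congr (_ + _).
by rewrite -{1}(subnK m_le_a) exprD mulfK // expf_neq0.
Qed.

Lemma sum_weighted_cosum p m : prime p -> odd p -> (m <= n2 p)%N ->
  \sum_(k < p) (zeta p ^+ k) ^+ (n2 p).+1 * cosum (zeta p ^+ k) m
    = if m == n2 p then p%:R else 0.
Proof.
move=> p_pr p_odd m_le_n; have p_eq := odd_n2 p_odd.
have p_gt1 := prime_gt1 p_pr.
have p_ndvd_diff : (p %| (n2 p).+1 - m)%N = false by apply: gtnNdvd; lia.
have p_dvd_sum : (p %| (n2 p).+1 + m)%N = (m == n2 p).
  case: eqP => [-> | m_neq_n]; first by rewrite addSn addnn -mul2n -p_eq dvdnn.
  by apply: gtnNdvd; lia.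
have zk_neq0 k : zeta p ^+ k != 0 by rewrite expf_neq0 ?zeta_neq0 ?prime_gt0.
have z_order e := zeta_prime_expr_eq1 e p_pr.
under eq_bigr do rewrite mulX_cosum ?(leqW m_le_n) //.
by rewrite big_split /= !(sum_root_expr _ z_order) p_ndvd_diff p_dvd_sum addr0.
Qed.

Lemma sum_weighted_eq_at1 p (F : algC -> algC) : prime p ->
    (forall k, (0 < k < p)%N -> F (zeta p ^+ k) = 0) ->
  \sum_(k < p) (zeta p ^+ k) ^+ (n2 p).+1 * F (zeta p ^+ k) = F 1.
Proof.
move=> p_pr F_conj; have p_gt0 := prime_gt0 p_pr.
rewrite (bigD1 (Ordinal p_gt0)) //= expr0 expr1n mul1r big1 ?addr0 // => k k_neq0.
by rewrite F_conj ?mulr0 // ltn_ord andbT lt0n.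
Qed.

Lemma cosum_relation_int p (a : 'I_(n2 p) -> int) : prime p -> (5 <= p)%N ->
    (forall k, (0 < k < p)%N -> \sum_(j < n2 p) cosum (zeta p ^+ k) j.+1 *~ a j
       = cosum (zeta p ^+ k) (n2 p) + cosum (zeta p ^+ k) (n2 p - 2)) ->
  p%:Z * (\sum_(j < n2 p) (if j.+1 == n2 p then a j else 0) - 1)
    = 2 * (\sum_(j < n2 p) a j - 2).
Proof.
move=> p_pr p_ge5 a_rel.
have p_odd := prime_ge5_odd p_pr p_ge5.
have n_ge2 : (2 <= n2 p)%N by have := odd_n2 p_odd; lia.
pose F y := \sum_(j < n2 p) cosum y j.+1 *~ a j - (cosum y (n2 p) + cosum y (n2 p - 2)).
have F_conj k : (0 < k < p)%N -> F (zeta p ^+ k) = 0.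
  by move/a_rel; rewrite /F => ->; rewrite subrr.
have := sum_weighted_eq_at1 p_pr F_conj.
rewrite {2}/F !cosum1 (eq_bigr (fun j => 2 *~ a j)) => [|j _]; last by rewrite cosum1.
have F_weighted y : y ^+ (n2 p).+1 * F y =
    \sum_(j < n2 p) (y ^+ (n2 p).+1 * cosum y j.+1) *~ a j
    - (y ^+ (n2 p).+1 * cosum y (n2 p) + y ^+ (n2 p).+1 * cosum y (n2 p - 2)).
  rewrite /F mulrBr mulrDr mulr_sumr; congr (_ - _).
  by apply: eq_bigr => j _; rewrite mulrzAr.
rewrite (eq_bigr _ (fun k _ => F_weighted _)) sumrB big_split /= exchange_big /=.
under eq_bigr do rewrite -mulrz_suml sum_weighted_cosum // ?ltn_ord.
rewrite !sum_weighted_cosum // ?leq_subr // eqxx ifN; last by apply/eqP; lia.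
have -> : \sum_(j < n2 p) (if j.+1 == n2 p then p%:R else 0) *~ a j
    = p%:R * \sum_(j < n2 p) (if j.+1 == n2 p then a j else 0)%:~R :> algC.
  by rewrite mulr_sumr; apply: eq_bigr => j _; case: ifP; rewrite ?mulr0 ?mul0rz ?mulrzr.
have -> : \sum_(j < n2 p) 2 *~ a j = 2 * \sum_(j < n2 p) (a j)%:~R :> algC.
  by rewrite mulr_sumr; apply: eq_bigr => j _; rewrite mulrzr.
move=> E; apply: (@intr_inj algC); rewrite !rmorphM !rmorphB !rmorph_sum /=.
transitivity (p%:R * \sum_(j < n2 p) (if j.+1 == n2 p then a j else 0)%:~R
  - (p%:R + 0) : algC); first by ring.
by rewrite E; ring.
Qed.

Lemma coprime_lt_prime p k : prime p -> (0 < k < p)%N -> coprime k p.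
Proof.
by move=> p_pr /andP[k_gt0 k_lt_p]; rewrite coprime_sym prime_coprime // gtnNdvd.
Qed.

Lemma b_relation_conj p k (a : 'I_(n2 p) -> int) : prime p -> (2 <= n2 p)%N ->
    coprime k p ->
    b_ p 1 * b_ p (n2 p - 1) = \sum_(j < n2 p) b_ p j.+1 *~ a j ->
  \sum_(j < n2 p) cosum (zeta p ^+ k) j.+1 *~ a j
    = cosum (zeta p ^+ k) (n2 p) + cosum (zeta p ^+ k) (n2 p - 2).
Proof.
move=> p_pr n_ge2 co_kp b_rel.
have [n1_le [n1_eq n2_eq]] :
  (1 <= n2 p - 1 /\ n2 p - 1 + 1 = n2 p /\ n2 p - 1 - 1 = n2 p - 2)%N by lia.
have [u uE] := exists_aut_zeta co_kp; have u_zeta := uE p (dvdnn p).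
have y_neq0 : zeta p ^+ k != 0 by rewrite expf_neq0 // zeta_neq0 ?prime_gt0.
have := congr1 u b_rel; rewrite rmorphM !(rmorph_b _ u_zeta) mulrC cosumM //.
rewrite n1_eq n2_eq rmorph_sum => ->; apply: eq_bigr => j _.
by rewrite rmorphMz (rmorph_b _ u_zeta).
Qed.

Lemma b1_bpred_notin_span p (c : 'I_(n2 p) -> int) : prime p -> (5 <= p)%N ->
  b_ p 1 * b_ p (n2 p - 1)
    != \sum_(j < n2 p) ((if j.+1 == n2 p then 2 else 1) * b_ p j.+1) *~ c j.
Proof.
move=> p_pr p_ge5; apply/eqP => b_eq.
have p_odd := prime_ge5_odd p_pr p_ge5.
have p_eq := odd_n2 p_odd.
pose a (j : 'I_(n2 p)) : int := (if j.+1 == n2 p then 2 else 1) * c j.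
have b_rel : b_ p 1 * b_ p (n2 p - 1) = \sum_(j < n2 p) b_ p j.+1 *~ a j.
  rewrite b_eq; apply: eq_bigr => j _.
  by rewrite mulrzA; case: ifP; rewrite ?mul1r // mulr_natl.
have n_ge2 : (2 <= n2 p)%N by lia.
have a_rel k : (0 < k < p)%N -> _ := fun k_range =>
  b_relation_conj p_pr n_ge2 (coprime_lt_prime p_pr k_range) b_rel.
have := cosum_relation_int p_pr p_ge5 a_rel.
have -> : \sum_(j < n2 p) (if j.+1 == n2 p then a j else 0)
    = 2 * \sum_(j < n2 p) (if j.+1 == n2 p then c j else 0).
  rewrite mulr_sumr; apply: eq_bigr => j _.
  by rewrite /a; case: (j.+1 == n2 p); rewrite ?mulr0.
move: (\sum_(j < n2 p) _) (\sum_(j < n2 p) a j) => x y; clear -p_eq; nia.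
Qed.

Lemma inI_b r p j : (0 < j < n2 p)%N -> inI r p (b_ p j).
Proof.
case/andP=> j_gt0 j_lt; pose i0 := Ordinal (n1_gt0 r).
pose j0 := Ordinal (leq_ltn_trans (leq_pred j) j_lt).
exists (fun i k => ((i == i0) && (k == j0))%:R).
rewrite (bigD1 i0) // (bigD1 j0) //= eqxx mulr1z.
rewrite [X in _ + X + _]big1 => [|k /negbTE k_neq_j]; last by rewrite k_neq_j mulr0z.
rewrite [X in _ + X]big1 => [|i /negbTE i_neq0]; last first.
  by apply: big1 => k _; rewrite i_neq0 mulr0z.
by rewrite !addr0 /Igen /e_ /= prednK // ltn_eqF // !mul1r.
Qed.

Lemma inOK_b1 r p : (0 < p)%N -> inOK r p (b_ p 1).
Proof.
move=> p_gt0; split=> [S _ // | ]; rewrite rpredD // rpredX //.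
  by apply: (Aint_unity_root p_gt0); rewrite unity_rootE zeta_expr_order.
by apply: (Aint_unity_root p_gt0); rewrite unity_rootE exprVn zeta_expr_order invr1.
Qed.

Theorem proposition3p5 (r p : nat) :
  (3 <= r)%N -> prime p -> (5 <= p)%N ->
  ~ is_ideal_of (inOK r p) (inI r p).
Proof.
move=> r_ge3 p_pr p_ge5 [_ [_ [_ I_mul]]].
have p_odd := prime_ge5_odd p_pr p_ge5.
have n_ge2 : (2 <= n2 p)%N by have := odd_n2 p_odd; lia.
have bpred_I : inI r p (b_ p (n2 p - 1)) by apply: inI_b; lia.
have [c prod_eq] := I_mul _ _ (inOK_b1 r (prime_gt0 p_pr)) bpred_I.
have prod_fixed (u : {rmorphism algC -> algC}) : u (zeta p) = zeta p ->
    u (b_ p 1 * b_ p (n2 p - 1)) = b_ p 1 * b_ p (n2 p - 1).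
  by move=> u_zeta; rewrite rmorphM !rmorph_cosum u_zeta.
have r_gt0 : (0 < r)%N by lia.
have := b1_bpred_notin_span (c (Ordinal (n1_gt0 r))) p_pr p_ge5.
by rewrite -(inI_fixed_eq_b_span r_gt0 p_odd prod_fixed prod_eq) eqxx.
Qed.
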